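(* Let $\alpha<_c\beta$ with $\beta/\!\!/\alpha$ an nc border strip with $n$ boxes, and let $w\in CRHW_n$ satisfy $w(\alpha)=\beta$. If $j\in SE(\beta/\!\!/\alpha)$, then $j\notin\mathrm{leg}(w)$.
   Context: A composition is a finite sequence $\alpha=(\alpha_1,\dots,\alpha_k)$ of positive integers; $\ell(\alpha)=k$; its diagram is the set of boxes $(i,j)$, $1\le i\le\ell(\alpha)$, $1\le j\le\alpha_i$, rows top to bottom, columns left to right. For compositions $\gamma=(\gamma_1,\dots,\gamma_l)$, $\delta$ write $\gamma\lessdot_c\delta$ if $\delta=(1,\gamma_1,\dots,\gamma_l)$ or $\delta=(\gamma_1,\dots,\gamma_k+1,\dots,\gamma_l)$ with $\gamma_i\ne\gamma_k$ for all $i<k$; $<_c$ is the transitive closure. For $\gamma<_c\delta$, $\delta/\!\!/\gamma$ consists of the boxes of $\delta$ other than $(\ell(\delta)-\ell(\gamma)+i,j)$, $1\le i\le\ell(\gamma)$, $1\le j\le\gamma_i$. $\mathrm{supp}(\beta/\!\!/\alpha)$ is the set of columns containing a box of $\beta/\!\!/\alpha$; interval shape: supp is a set of consecutive integers. nc border strip: an interval shape such that (1) if $(i,1),(i,2)\in\beta/\!\!/\alpha$ then $(i,1)$ is the bottommost box of column 1 of $\beta/\!\!/\alpha$, and (2) if $(i,j),(i,j+1)\in\beta/\!\!/\alpha$ with $j\ge2$ then $(i,j)$ is the topmost box of column $j$ of $\beta/\!\!/\alpha$. $E(\beta/\!\!/\alpha)$ is the set of $j$ such that $(i,j),(i,j+1)\in\beta/\!\!/\alpha$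 for some $i$; $SE(\beta/\!\!/\alpha)$ is the set of $j\notin E(\beta/\!\!/\alpha)$ for which there are boxes $(i,j),(i',j+1)\in\beta/\!\!/\alpha$ with $i'>i$. Box-adding operators: $\mathfrak t_1(\alpha)=(1,\alpha_1,\dots,\alpha_k)$; for $i\ge2$, $\mathfrak t_i(\alpha)$ increases the leftmost part equal to $i-1$ by $1$, and is $0$ if none; $\mathfrak t_i(0)=0$. A word $w=\mathfrak t_{i_1}\cdots\mathfrak t_{i_n}$ acts by $w(\alpha)=\mathfrak t_{i_1}(\cdots\mathfrak t_{i_n}(\alpha))$; it is a reverse $k$-hookword if $i_1\le\cdots\le i_{k+1}>i_{k+2}>\cdots>i_n$, with $\mathrm{leg}(w)=\{i_{k+1},\dots,i_n\}$; connected if $\{i_1,\dots,i_n\}$ is a set of consecutive integers; $CRHW_n$ is the set of connected reverse hookwords of length $n$. *)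

From Stdlib Require Import Relations.
From mathcomp Require Import all_boot.
Set Implicit Arguments. Unset Strict Implicit. Unset Printing Implicit Defensive.

Definition composition (a : seq nat) : bool := all (fun x => 0 < x) a.

Definition cover_c (g d : seq nat) : Prop :=
  d = 1 :: g \/
  exists k, k < size g /\
    d = set_nth 0 g k (nth 0 g k).+1 /\
    (forall i, i < k -> nth 0 g i <> nth 0 g k).

Definition lt_c : relation (seq nat) := clos_trans (seq nat) cover_c.

(* Box (i,j) (1-indexed rows top to bottom, columns left to right) of the
   skew shape b // a. *)
Definition inskew (b a : seq nat) (i j : nat) : bool :=
  [&& 1 <= i <= size b, 1 <= j <= nth 0 b i.-1 &
      ~~ ((size b - size a < i) && (j <= nth 0 a (i - (size b - size a)).-1))].

Definition skew_boxes (b a : seq nat) : seq (nat * nat) :=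
  [seq ij <- [seq (i, j) | i <- iota 1 (size b), j <- iota 1 (nth 0 b i.-1)]
   | inskew b a ij.1 ij.2].

Definition in_supp (b a : seq nat) (j : nat) : Prop := exists i, inskew b a i j.

Definition interval_shape (b a : seq nat) : Prop :=
  forall j1 j2 j3, j1 <= j2 -> j2 <= j3 ->
    in_supp b a j1 -> in_supp b a j3 -> in_supp b a j2.

Definition nc_border_strip (b a : seq nat) : Prop :=
  interval_shape b a /\
  (forall i, inskew b a i 1 -> inskew b a i 2 ->
     forall i', inskew b a i' 1 -> i' <= i) /\
  (forall i j, 2 <= j -> inskew b a i j -> inskew b a i j.+1 ->
     forall i', inskew b a i' j -> i <= i').

Definition inE (b a : seq nat) (j : nat) : Prop :=
  exists i, inskew b a i j /\ inskew b a i j.+1.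

Definition inSE (b a : seq nat) (j : nat) : Prop :=
  ~ inE b a j /\
  exists i i', i < i' /\ inskew b a i j /\ inskew b a i' j.+1.

(* Box-adding operators; None plays the role of 0. *)
Definition t_op (i : nat) (a : seq nat) : option (seq nat) :=
  match i with
  | 0 => None
  | 1 => Some (1 :: a)
  | i'.+1 =>
      let k := find (pred1 i') a in
      if k < size a then Some (set_nth 0 a k i) else None
  end.

(* w = t_{i1} ... t_{in} acts by applying t_{in} first. *)
Definition word_act (w : seq nat) (a : seq nat) : option (seq nat) :=
  foldr (fun i o => obind (t_op i) o) (Some a) w.

Definition rev_hookword (k : nat) (w : seq nat) : Prop :=
  k < size w /\ sorted leq (take k.+1 w) /\ sorted (fun x y => y < x) (drop k w).

Definition leg (k : nat) (w : seq nat) : seq nat := drop k w.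

Definition connected_word (w : seq nat) : Prop :=
  forall x y z, x \in w -> z \in w -> x <= y -> y <= z -> y \in w.

Definition CRHW (n : nat) (w : seq nat) : Prop :=
  size w = n /\ all (fun i => 0 < i) w /\ connected_word w /\
  exists k, rev_hookword k w.

From Stdlib Require Import Relations.
From mathcomp Require Import all_boot zify.
Set Implicit Arguments. Unset Strict Implicit. Unset Printing Implicit Defensive.

(* Read compositions bottom-up, so that the rows of alpha and beta line up;
   then t_c adds one box in column c, at the end of the topmost row of length
   c-1 (a new top row when c = 1).  In the application order of a reverse
   hookword the leg letters come first and increase, the arm letters come last
   and decrease.  If j is a leg letter, the letters before t_j are < j and leave
   the rows of length >= j-1 alone, so t_j puts a box of beta // alpha into
   column j of some row r.  Later letters >= j never push a row above r into
   column j, and, as long as row r ends in column j, never push a row below r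
   from column <= j past column j; the final letters < j preserve both facts.
   Now a box in column j above a box in column j+1 lies in a row <= r, so row
   r cannot end in column j: it contains boxes in columns j and j+1, i.e. j is
   in E.  For j = 1 the arm may add new rows above r, and the second
   fact is kept for all rows other than r instead. *)

(* The part in the p-th row counted from the bottom, 0 above the top row. *)
Definition bpart (s : seq nat) (p : nat) : nat := nth 0 (rev s) p.

Lemma bpart_default s p : size s <= p -> bpart s p = 0.
Proof. by move=> hp; rewrite /bpart nth_default // size_rev. Qed.

Lemma bpart_cons1 s p : bpart (1 :: s) p = if p == size s then 1 else bpart s p.
Proof.
rewrite /bpart rev_cons nth_rcons size_rev.
by case: ltngtP => // hp; rewrite nth_default // size_rev ltnW.
Qed.

Lemma bpart_set_nth s k x p : k < size s ->
  bpart (set_nth 0 s k x) p = if p == size s - k.+1 then x else bpart s p.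
Proof.
move=> hk; have hsz : size (set_nth 0 s k x) = size s by rewrite size_set_nth; apply/maxn_idPr.
case: (ltnP p (size s)) => hp; last first.
  by rewrite !bpart_default ?hsz //; case: eqP => // e; lia.
rewrite /bpart !nth_rev ?hsz // nth_set_nth /=.
by have -> : (size s - p.+1 == k) = (p == size s - k.+1) by apply/eqP/eqP; lia.
Qed.

Definition adds_box (c : nat) (f g : nat -> nat) : Prop :=
  exists q, [/\ f q = c.-1, 1 < c -> forall p, q < p -> f p <> c.-1
              & forall p, g p = if p == q then c else f p].

Lemma t_op_size c s s' : t_op c s = Some s' -> size s <= size s'.
Proof.
case: c => [|[|c]] //= => [[<-]|]; first exact: leqnSn.
by case: ifP => // _ [<-]; rewrite size_set_nth leq_maxr.
Qed.

Lemma t_op_adds_box c s s' : t_op c s = Some s' -> adds_box c (bpart s) (bpart s').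
Proof.
case: c => [|[|c]] //=.
  move=> [<-]; exists (size s); split=> // [|p]; first exact: bpart_default.
  exact: bpart_cons1.
case: ifP => // hk [<-]; set k := find _ s in hk *.
have bpart_k p : p < size s -> bpart s p = nth 0 s (size s - p.+1).
  by move=> hp; rewrite /bpart nth_rev.
exists (size s - k.+1); split; last by move=> p; apply: bpart_set_nth.
  rewrite bpart_k; last by lia.
  have -> : size s - (size s - k.+1).+1 = k by lia.
  by apply/eqP; apply: (nth_find 0 (a := pred1 c.+1)); rewrite has_find.
move=> _ p hp; case: (ltnP p (size s)) => hps; last by rewrite bpart_default.
rewrite bpart_k // => he.
have : pred1 c.+1 (nth 0 s (size s - p.+1)) = false by apply: before_find; rewrite -/k; lia.
by rewrite /= he eqxx.
Qed.

Lemma word_act_cat w1 w2 a :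
  word_act (w1 ++ w2) a = obind (word_act w1) (word_act w2 a).
Proof.
rewrite /word_act foldr_cat; case: (foldr _ _ w2) => //=.
by elim: w1 => //= c w1 ->.
Qed.

Lemma word_act_catP w1 w2 a b : word_act (w1 ++ w2) a = Some b ->
  exists2 m, word_act w2 a = Some m & word_act w1 m = Some b.
Proof. by rewrite word_act_cat; case: (word_act w2 a) => // m; exists m. Qed.

Lemma word_act_size w a b : word_act w a = Some b -> size a <= size b.
Proof.
elim: w b => [|c w IH] b /=; first by move=> [<-].
case e: (word_act w a) => [m|] //= hm.
exact: leq_trans (IH m e) (t_op_size hm).
Qed.

Lemma word_act_inv (P : pred nat) (I : (nat -> nat) -> Prop) w a b :
  (forall c f g, P c -> adds_box c f g -> I f -> I g) ->
  all P w -> I (bpart a) -> word_act w a = Some b -> I (bpart b).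
Proof.
move=> step; elim: w b => [|c w IH] b /=; first by move=> _ ? [<-].
case/andP=> Pc Pw Ia; case e: (word_act w a) => [m|] //= hm.
exact: step Pc (t_op_adds_box hm) (IH m Pw Ia e).
Qed.

Lemma sorted_leq_split t s : sorted leq s ->
  exists s1 s2, [/\ s = s1 ++ s2, all (fun c => c < t) s1 & all (leq t) s2].
Proof.
elim: s => [|x s IH] hs; first by exists [::], [::].
case: (ltnP x t) => hx; last first.
  exists [::], (x :: s); split=> //=; rewrite hx /=.
  by apply: (sub_all _ (order_path_min leq_trans hs)) => y; exact: leq_trans.
have [s1 [s2 [-> h1 h2]]] := IH (path_sorted hs).
by exists (x :: s1), s2; rewrite /= hx.
Qed.

Lemma sorted_gtn_split (j : nat) s : sorted (fun x y => y < x) s -> j \in s ->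
  exists s1 s2, [/\ s = s1 ++ j :: s2, all (fun c => j < c) s1 & all (fun c => c < j) s2].
Proof.
have gtn_trans : transitive (fun x y : nat => y < x).
  by move=> x y z hyx hzy; exact: ltn_trans hzy hyx.
move=> hs hj; move: hj hs => /splitPr [s1 s2].
rewrite (sorted_pairwise gtn_trans) pairwise_cat pairwise_cons allrel_consr.
by case/and3P=> /andP[s1_gt _] _ /andP[s2_lt _]; exists s1, s2.
Qed.

Lemma hookword_leg_split k w j t : rev_hookword k w -> j \in leg k w -> t <= j.+1 ->
  exists Z2 Z1 u, [/\ w = Z2 ++ Z1 ++ j :: u, all (fun c => c < j) u,
                      all (leq t) Z1 & all (fun c => c < t) Z2].
Proof.
move=> [_ [arm_sorted leg_sorted]] hj ht.
have [X [u [eleg X_gt u_lt]]] := sorted_gtn_split leg_sorted hj.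
have arm_sorted' : sorted leq (take k w).
  by rewrite -(take_takel w (leqnSn k)); exact: take_sorted.
have [Z2 [Y [earm Z2_lt Y_ge]]] := sorted_leq_split t arm_sorted'.
exists Z2, (Y ++ X), u; split=> //.
- by rewrite -(cat_take_drop k w) earm -catA -catA -eleg.
- by rewrite all_cat Y_ge; apply: (sub_all _ X_gt) => c; exact: leq_trans.
Qed.

Section LegLetter.
Variables (I0 : (nat -> nat) -> Prop) (I1 I2 : nat -> (nat -> nat) -> Prop) (j t : nat).
Hypothesis t_le : t <= j.+1.
Hypothesis I0_step : forall c f g, c < j -> adds_box c f g -> I0 f -> I0 g.
Hypothesis I1_init :
  forall s s', I0 (bpart s) -> t_op j s = Some s' -> exists r, I1 r (bpart s').
Hypothesis I1_step : forall r c f g, t <= c -> adds_box c f g -> I1 r f -> I1 r g.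
Hypothesis I1_I2 : forall r f, I1 r f -> I2 r f.
Hypothesis I2_step : forall r c f g, c < t -> adds_box c f g -> I2 r f -> I2 r g.

Lemma word_act_leg_inv k w a b : rev_hookword k w -> j \in leg k w ->
  I0 (bpart a) -> word_act w a = Some b -> exists r, I2 r (bpart b).
Proof.
move=> hk hj Ia; have [Z2 [Z1 [u [-> u_lt Z1_ge Z2_lt]]]] := hookword_leg_split hk hj t_le.
case/word_act_catP=> m /word_act_catP [s1 /(word_act_catP (w1 := [:: j])) [s0 hu hj0] hZ1 hZ2].
have [r I1r] := I1_init (word_act_inv I0_step u_lt Ia hu) hj0.
exists r; apply: word_act_inv (I2_step (r := r)) Z2_lt _ hZ2.
exact/I1_I2/(word_act_inv (I1_step (r := r)) Z1_ge I1r hZ1).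
Qed.

End LegLetter.

Definition se_profile (j : nat) (A f : nat -> nat) : Prop :=
  (forall p, A p < j -> f p <= j) /\
  exists p p', [/\ p' < p, A p < j <= f p & A p' <= j < f p'].

Lemma inskew_bpart b a i j : size a <= size b -> inskew b a i j =
  [&& 0 < i <= size b, 0 < j & bpart a (size b - i) < j <= bpart b (size b - i)].
Proof.
move=> hab; rewrite /inskew; case: (boolP (0 < i <= size b)) => //= /andP[i0 ib].
have row_b : nth 0 b i.-1 = bpart b (size b - i).
  by rewrite /bpart nth_rev; [congr nth; lia | lia].
rewrite row_b; case: (ltnP (size b - size a) i) => h /=.
  have row_a : nth 0 a (i - (size b - size a)).-1 = bpart a (size b - i).
    by rewrite /bpart nth_rev; [congr nth; lia | lia].
  by rewrite row_a -ltnNge; case: (0 < j); case: (j <= _); rewrite ?andbF ?andbT.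
by rewrite (@bpart_default a); [case: (0 < j); case: (j <= _) | lia].
Qed.

Lemma inSE_se_profile b a j : size a <= size b -> inSE b a j ->
  0 < j /\ se_profile j (bpart a) (bpart b).
Proof.
move=> hab [noE [i [i' [lt_ii' [colj colj1]]]]].
rewrite !inskew_bpart // in colj colj1.
case/and3P: colj => /andP[i0 ib] j0 /andP[ha hb].
case/and3P: colj1 => /andP[i0' ib'] _ /andP[ha' hb'].
split=> //; split; last by exists (size b - i), (size b - i'); split=> //; lia.
move=> p hA; rewrite leqNgt; apply/negP => hB.
have pb : p < size b by case: (ltnP p (size b)) => // h; rewrite bpart_default in hB.
apply: noE; exists (size b - p); rewrite !inskew_bpart //.
have -> : size b - (size b - p) = p by lia.
by split; apply/and4P; split; try apply/andP; try split; lia.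
Qed.

Section ColumnInvariants.
Variables (A : nat -> nat) (j : nat).

Definition pre_col (f : nat -> nat) : Prop :=
  forall p, (j.-1 <= A p -> f p = A p) /\ (A p < j.-1 -> f p <= j.-1).

Lemma pre_col_refl : pre_col A.
Proof. by move=> p; split=> // /ltnW. Qed.

Lemma pre_col_step c f g : c < j -> adds_box c f g -> pre_col f -> pre_col g.
Proof.
move=> cj [q [fq _ hg]] hf p; rewrite hg; case: eqP => [->|_]; last exact: hf.
by have := hf q; lia.
Qed.

Definition col_added (r : nat) (f : nat -> nat) : Prop :=
  [/\ A r < j <= f r, forall p, r < p -> f p <> j.-1,
      forall p, r < p -> A p < j -> f p < j
    & f r = j -> forall p, p < r -> A p <= j -> f p <= j].

Lemma col_added_init f g : 1 < j -> pre_col f -> adds_box j f g ->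
  exists r, col_added r g.
Proof.
move=> j_gt1 hf [r [fr top hg]]; exists r; split.
- by rewrite hg eqxx; have := hf r; lia.
- by move=> p hp; rewrite hg; case: eqP => [|_]; [lia | exact: top].
- move=> p hp hA; rewrite hg; case: eqP => [|_]; first lia.
  by have := hf p; have := top j_gt1 p hp; lia.
- by move=> _ p hp hA; rewrite hg; case: eqP => [|_]; [lia | have := hf p; lia].
Qed.

Lemma col_added_step r c f g : j <= c -> adds_box c f g ->
  col_added r f -> col_added r g.
Proof.
move=> jc [q [fq top hg]] [hr above above_lt below].
split.
- by rewrite hg; case: eqP; lia.
- by move=> p hp; rewrite hg; case: eqP => [|_]; [lia | exact: above].
- move=> p hp hA; rewrite hg; case: eqP => [e|_]; last exact: above_lt.
  by subst p; have := above q hp; have := above_lt q hp hA; lia.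
- rewrite hg; case: eqP => [e|_] gr p hp hA; first by subst; lia.
  rewrite hg; case: eqP => [e|_]; last exact: below.
  subst p; have := below gr q hp hA.
  by case: (ltnP 1 c) => [c_gt1|]; [have := top c_gt1 r hp|]; lia.
Qed.

Definition col_kept (r : nat) (f : nat -> nat) : Prop :=
  [/\ A r < j <= f r, forall p, r < p -> A p < j -> f p < j
    & f r = j -> forall p, p < r -> A p <= j -> f p <= j].

Lemma col_added_kept r f : col_added r f -> col_kept r f.
Proof. by case. Qed.

Lemma col_kept_step r c f g : c < j -> adds_box c f g -> col_kept r f -> col_kept r g.
Proof.
move=> cj [q [fq _ hg]] [hr above below].
have qr : (r == q) = false by apply/eqP => e; subst; lia.
split.
- by rewrite hg qr.
- by move=> p hp hA; rewrite hg; case: eqP => [|_]; [lia | exact: above].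
- rewrite hg qr => fr p hp hA; rewrite hg; case: eqP => [|_]; [lia | exact: below].
Qed.

Lemma col_kept_not_se r f : col_kept r f -> ~ se_profile j A f.
Proof.
move=> [hr above below] [noE [p [p' [lt_p'p colj colj1]]]].
have pr : p <= r by case: (leqP p r) => // rp; have := above p rp; lia.
have fr : f r = j by have := noE r; lia.
by have := below fr p'; lia.
Qed.

End ColumnInvariants.

Section FirstColumn.
Variable A : nat -> nat.

Definition first_col_added (r : nat) (f : nat -> nat) : Prop :=
  [/\ A r = 0, 0 < f r, forall p, r < p -> f p = 0
    & f r = 1 -> forall p, p != r -> A p <= 1 -> f p <= 1].

Lemma first_col_added_init s s' : pre_col A 1 (bpart s) -> t_op 1 s = Some s' ->
  exists r, first_col_added r (bpart s').
Proof.
move=> hs [<-]; exists (size s).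
have As p : A p = bpart s p by case: (hs p) => ->.
split.
- by rewrite As bpart_default.
- by rewrite bpart_cons1 eqxx.
- by move=> p hp; rewrite bpart_cons1; case: eqP => [|_]; [lia | apply: bpart_default; lia].
- move=> _ p /negbTE hp; rewrite bpart_cons1 hp As; lia.
Qed.

Lemma first_col_added_step r c f g : 1 < c -> adds_box c f g ->
  first_col_added r f -> first_col_added r g.
Proof.
move=> c_gt1 [q [fq top hg]] [Ar fr above below].
have qr : q <= r by case: (leqP q r) => // rq; have := above q rq; lia.
split=> //.
- by rewrite hg; case: eqP; lia.
- move=> p hp; rewrite hg; case: eqP => [e|_]; [lia | exact: above].
- rewrite hg; case: eqP => [_|ne] gr p hp hA; first lia.
  rewrite hg; case: eqP => [e|_]; last exact: below.
  have lt_qr : q < r by lia.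
  by subst p; have := below gr q hp hA; have := top c_gt1 r lt_qr; lia.
Qed.

Definition first_col_kept (r : nat) (f : nat -> nat) : Prop :=
  [/\ A r = 0, 0 < f r & f r = 1 -> forall p, p != r -> A p <= 1 -> f p <= 1].

Lemma first_col_added_kept r f : first_col_added r f -> first_col_kept r f.
Proof. by case. Qed.

Lemma first_col_kept_step r c f g : c < 2 -> adds_box c f g ->
  first_col_kept r f -> first_col_kept r g.
Proof.
move=> c_lt2 [q [fq _ hg]] [Ar fr below].
have qr : (r == q) = false by apply/eqP => e; subst; lia.
split=> //; first by rewrite hg qr.
rewrite hg qr => gr p hp hA; rewrite hg; case: eqP => [|_]; [lia | exact: below].
Qed.

Lemma first_col_kept_not_se r f : first_col_kept r f -> ~ se_profile 1 A f.
Proof.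
move=> [Ar fr below] [noE [p [p' [_ _ colj1]]]].
have f_r : f r = 1 by have := noE r; lia.
have p'r : p' != r by apply/eqP => e; subst; lia.
by have := below f_r p' p'r; lia.
Qed.

End FirstColumn.

Theorem mainTheorem13 (alpha beta : seq nat) (n : nat) (w : seq nat) (j : nat) :
  composition alpha -> composition beta ->
  lt_c alpha beta ->
  nc_border_strip beta alpha ->
  size (skew_boxes beta alpha) = n ->
  CRHW n w ->
  word_act w alpha = Some beta ->
  inSE beta alpha j ->
  forall k, rev_hookword k w -> j \notin leg k w.
Proof.
move=> _ _ _ _ _ _ hw hSE k hk; apply/negP => hj.
have [j_gt0 hse] := inSE_se_profile (word_act_size hw) hSE.
set A := bpart alpha in hse.
case: (ltnP 1 j) => [j_gt1 | j_le1].
- have added_init s s' : pre_col A j (bpart s) -> t_op j s = Some s' ->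
      exists r, col_added A j r (bpart s').
    by move=> hs /t_op_adds_box; apply: col_added_init.
  have [r hr] := word_act_leg_inv (leqnSn j) (@pre_col_step A j) added_init
    (@col_added_step A j) (@col_added_kept A j) (@col_kept_step A j) hk hj
    (pre_col_refl A j) hw.
  exact: col_kept_not_se hr hse.
- have j1 : j = 1 by lia.
  subst j; have [r hr] := word_act_leg_inv (leqnn 2) (@pre_col_step A 1)
    (@first_col_added_init A) (@first_col_added_step A) (@first_col_added_kept A)
    (@first_col_kept_step A) hk hj (pre_col_refl A 1) hw.
  exact: first_col_kept_not_se hr hse.
Qed.
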